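(* Let $n,a,t,k\in\mathbb N$ satisfy $t<a<n$. Assume $\mathcal F_1,\dots,\mathcal F_k\subseteq\binom{[n]}{a}$ satisfy $$|\mathcal F_i|\ge 2^{k-2}\cdot\sqrt{32a(n-a)}\cdot\exp\left(-\frac{(a-t-1)^2}{40a}\right)\cdot\binom{n}{a}+2^{k-2}$$ for all $i\in\{1,\dots,k\}$. Then there are $F_1\in\mathcal F_1,\dots,F_k\in\mathcal F_k$ such that $|F_1\cap F_i|\ge t+1$ for all $i\in\{2,\dots,k\}$.
   Context: $[n]=\{1,\dots,n\}$ and $\binom{[n]}{a}$ denotes the family of all $a$-element subsets of $[n]$. *)

From mathcomp Require Import all_boot.
From Stdlib Require Import Reals.

(* Fix P in the first family and call it lonely for i if it meets every member
   of F_i in at most t points.  On the a-subsets S of [n], the function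
   S |-> max_(P lonely for i) |S :&: P| equals a on the lonely sets, is at most t
   on F_i, and changes by at most 1 when one element of S is exchanged.  Exposing
   the elements of S one at a time, with Hoeffding's lemma at each step, shows that
   both level sets are exponentially small:
   |lonely_i| |F_i| <= (C(n, a) exp(-(a - t)^2 / (32 a)))^2.
   The size hypothesis then makes the lonely sets, over all i, fewer than |F_1|,
   so some P in F_1 has a partner meeting it in more than t points in every F_i. *)

From mathcomp Require Import all_boot.
From Stdlib Require Import Reals.
From mathcomp Require Import all_order all_algebra perm Rstruct ring lra.

Import Order.TTheory GRing.Theory Num.Theory.
Set Implicit Arguments. Unset Strict Implicit. Unset Printing Implicit Defensive.
Local Open Scope ring_scope.

(* Stdlib's [exp] reads its argument in [R_scope]; [expR] reads it in [ring_scope]. *)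
Local Notation expR x := (exp x%R).

Lemma expR_gt0 (x : R) : 0 < expR x.
Proof. exact/RltP/exp_pos. Qed.

Lemma expR_ge1Dx (x : R) : 1 + x <= expR x.
Proof. exact/RleP/exp_ineq1_le. Qed.

Lemma ler_expR (x y : R) : x <= y -> expR x <= expR y.
Proof.
rewrite le_eqVlt => /predU1P[-> // | /RltP lt_xy].
exact/ltW/RltP/exp_increasing.
Qed.

Lemma expR_add (x y : R) : expR (x + y) = expR x * expR y.
Proof. by rewrite expRD RplusE. Qed.

Lemma expR_le_1DxD2sqr (x : R) : x <= 1 / 2 -> expR x <= 1 + x + 2 * x ^+ 2.
Proof.
(* exp x <= 1 / (1 - x) <= 1 + x + 2 x^2 *)
move=> x_le.
have expR_1Bx : expR x * (1 - x) <= 1.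
  have : expR x * (1 - x) <= expR x * expR (- x).
    by rewrite ler_pM2l ?expR_gt0 //; exact: expR_ge1Dx.
  by rewrite -expR_add subrr expR0.
have quad_1Bx : 1 <= (1 + x + 2 * x ^+ 2) * (1 - x).
  have : 0 <= x ^+ 2 * (1 - 2 * x) by rewrite mulr_ge0 ?sqr_ge0 //; lra.
  by rewrite -subr_ge0; congr (0 <= _); ring.
rewrite -(@ler_pM2r _ (1 - x)); [exact: le_trans quad_1Bx | lra].
Qed.

Lemma expR_mul_le (lam d : R) : 0 <= lam <= 1 / 2 -> `|d| <= 1 ->
  expR (lam * d) <= 1 + lam * d + 2 * lam ^+ 2.
Proof.
move=> /andP[lam_ge0 lam_le] /[!ler_norml] /andP[d_ge d_le].
have lamd_sqr : (lam * d) ^+ 2 <= lam ^+ 2.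
  by rewrite exprMn ler_piMr ?sqr_ge0 //; nra.
by apply: le_trans (expR_le_1DxD2sqr _) _; [nra | lra].
Qed.

Section Average.
Variables (I : finType) (A : {set I}).

Lemma sum_expR_centered_le (d : I -> R) (lam : R) :
  0 <= lam <= 1 / 2 -> (forall i, i \in A -> `|d i| <= 1) -> \sum_(i in A) d i = 0 ->
  \sum_(i in A) expR (lam * d i) <= #|A|%:R * expR (2 * lam ^+ 2).
Proof.
move=> lam_range d_le1 sum_d0.
apply: le_trans (_ : \sum_(i in A) (1 + lam * d i + 2 * lam ^+ 2) <= _).
  by apply: ler_sum => i iA; apply: expR_mul_le; last exact: d_le1.
rewrite !big_split /= -mulr_sumr sum_d0 mulr0 addr0 !sumr_const -mulrnDl.
by rewrite [leRHS]mulr_natl; apply: ler_wMn2r; apply: expR_ge1Dx.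
Qed.

Definition avg (f : I -> R) := (\sum_(i in A) f i) / #|A|%:R.

Lemma avgN (f : I -> R) :
  avg (fun i => - f i) = - avg f.
Proof. by rewrite /avg sumrN mulNr. Qed.

Lemma sum_sub_avg (f : I -> R) :
  \sum_(i in A) (f i - avg f) = 0.
Proof.
have [A0 | [i0 i0A]] := set_0Vmem A; first by rewrite A0 big_set0.
have A_gt0 : 0 < #|A|%:R :> R by rewrite ltr0n card_gt0; apply/set0Pn; exists i0.
by rewrite sumrB sumr_const /avg; field; rewrite gt_eqF.
Qed.

Lemma norm_sub_avg_le (f : I -> R) i :
  {in A &, forall j k, `|f j - f k| <= 1} -> i \in A -> `|f i - avg f| <= 1.
Proof.
move=> f_close iA.
have A_gt0 : 0 < #|A|%:R :> R by rewrite ltr0n card_gt0; apply/set0Pn; exists i.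
have -> : f i - avg f = (\sum_(j in A) (f i - f j)) / #|A|%:R.
  by rewrite sumrB sumr_const /avg; field; rewrite gt_eqF.
rewrite normrM [`|_^-1|]gtr0_norm ?invr_gt0 // ler_pdivrMr // mul1r.
apply: le_trans (ler_norm_sum _ _ _) _.
by rewrite -sum1_card natr_sum ler_sum // => j jA; apply: f_close.
Qed.

Lemma norm_avgB_le (f g : I -> R) :
  {in A, forall i, `|f i - g i| <= 1} -> `|avg f - avg g| <= 1.
Proof.
move=> fg_close; have [A0 | [i0 i0A]] := set_0Vmem A.
  by rewrite /avg A0 !big_set0 !mul0r subrr normr0.
have A_gt0 : 0 < #|A|%:R :> R by rewrite ltr0n card_gt0; apply/set0Pn; exists i0.
rewrite /avg -mulrBl -sumrB normrM [`|_^-1|]gtr0_norm ?invr_gt0 // ler_pdivrMr // mul1r.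
apply: le_trans (ler_norm_sum _ _ _) _.
by rewrite -sum1_card natr_sum ler_sum.
Qed.

End Average.

Section Slices.
Variable T : finType.
Implicit Types (U S W : {set T}) (m : nat) (f : {set T} -> R).

Definition slice U m : {set {set T}} := [set S : {set T} | S \subset U & #|S| == m].

Lemma card_slice U m : #|slice U m| = 'C(#|U|, m).
Proof. exact: cards_draws. Qed.

Lemma card_slice_setD1 U m x : x \in U -> #|slice (U :\ x) m| = 'C(#|U|.-1, m).
Proof. by move=> xU; rewrite card_slice (cardsD1 x U) xU. Qed.

Lemma slice0 U : slice U 0 = [set set0].
Proof.
apply/setP => S; rewrite !inE cards_eq0.
by case: eqP => [->|]; rewrite ?sub0set ?andbF.
Qed.

Lemma sum_slice_setU1 (V : nmodType) U m (h : {set T} -> V) :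
  \sum_(x in U) \sum_(S in slice (U :\ x) m) h (x |: S) =
  (\sum_(S in slice U m.+1) h S) *+ m.+1.
Proof.
transitivity (\sum_(x in U) \sum_(S in slice U m.+1 | x \in S) h S).
  apply: eq_bigr => x xU.
  rewrite [RHS](reindex_onto (fun S : {set T} => x |: S) (fun S : {set T} => S :\ x)) /=; last first.
    by move=> S /andP[_ xS]; rewrite setD1K.
  symmetry; apply: eq_bigl => S; rewrite !inE.
  case xS: (x \in S).
    rewrite subsetD1 xS !andbF [_ == S](_ : _ = false) ?andbF //.
    by apply/negbTE/eqP => eqS; move: xS; rewrite -eqS !inE eqxx.
  rewrite setU1K ?xS // eqxx subUset sub1set xU subsetD1 xS cardsU1 xS /=.
  by rewrite eqxx add1n eqSS !andbT.
rewrite (exchange_big_dep (mem (slice U m.+1))) /=; last by move=> x S _ /andP[].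
rewrite -sumrMnl; apply: eq_bigr => S; rewrite inE => /andP[sU /eqP cS].
rewrite sumr_const -cS; congr (_ *+ _); apply: eq_card => x.
by rewrite unfold_in sU eqxx /=; apply/andb_idl/(subsetP sU).
Qed.

Lemma mem_tperm_imset x y W z : (z \in tperm x y @: W) = (tperm x y z \in W).
Proof.
apply/imsetP/idP => [[w wW ->] | zW]; first by rewrite tpermK.
by exists (tperm x y z); rewrite ?tpermK.
Qed.

Lemma sum_slice_tperm (V : nmodType) U m x y (h : {set T} -> V) : x \in U -> y \in U ->
  \sum_(S in slice (U :\ y) m) h S = \sum_(S in slice (U :\ x) m) h (tperm x y @: S).
Proof.
move=> xU yU.
rewrite (reindex (fun S : {set T} => tperm x y @: S)) /=; last first.
  exists (fun S : {set T} => tperm x y @: S) => S _;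
    by apply/setP => z; rewrite !mem_tperm_imset tpermK.
apply: eq_bigl => S; rewrite !inE card_imset; last exact: perm_inj.
rewrite sub_imset_pre (_ : tperm x y @^-1: (U :\ y) = U :\ x) //.
apply/setP => z; rewrite !inE.
case: (tpermP x y z) => [-> | -> | /eqP/negbTE -> /eqP/negbTE ->] //.
- by rewrite eqxx xU yU; case: eqP.
- by rewrite xU yU eq_sym.
Qed.

Definition swap_lipschitz (f : {set T} -> R) := forall S S',
  (#|S :\: S'| <= 1)%nat -> (#|S' :\: S| <= 1)%nat -> `|f S - f S'| <= 1.

Lemma swap_lipschitz_setU1 f x : swap_lipschitz f -> swap_lipschitz (fun S => f (x |: S)).
Proof.
move=> f_lip S S' S_S' S'_S; apply: f_lip.
  apply: leq_trans S_S'; apply: subset_leq_card; apply/subsetP => z.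
  by rewrite !inE negb_or => /andP[/andP[/negbTE zx ->]]; rewrite zx.
apply: leq_trans S'_S; apply: subset_leq_card; apply/subsetP => z.
by rewrite !inE negb_or => /andP[/andP[/negbTE zx ->]]; rewrite zx.
Qed.

Lemma swap_lipschitzN f : swap_lipschitz f -> swap_lipschitz (fun S => - f S).
Proof. by move=> f_lip S S' S_S' S'_S; rewrite -opprD normrN; apply: f_lip. Qed.

Lemma swap_lipschitz_tperm f x y W : swap_lipschitz f -> x \in W ->
  `|f (tperm x y @: W) - f W| <= 1.
Proof.
move=> f_lip xW; apply: f_lip.
  rewrite -(cards1 y); apply/subset_leq_card/subsetP => z; rewrite !inE mem_tperm_imset.
  by case: tpermP => [-> | -> | _ _]; rewrite ?xW ?eqxx ?andNb.
rewrite -(cards1 x); apply/subset_leq_card/subsetP => z; rewrite !inE mem_tperm_imset.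
by case: tpermP => [-> | -> | _ _]; rewrite ?xW ?eqxx ?andNb.
Qed.

Definition avg_star f U m x := avg (slice (U :\ x) m) (fun S => f (x |: S)).

Lemma avg_star_close f U m x y : swap_lipschitz f -> x \in U -> y \in U ->
  `|avg_star f U m x - avg_star f U m y| <= 1.
Proof.
move=> f_lip xU yU.
have -> : avg_star f U m y = avg (slice (U :\ x) m) (fun S => f (y |: tperm x y @: S)).
  by rewrite /avg_star /avg (sum_slice_tperm m _ xU yU) !card_slice_setD1.
apply: norm_avgB_le => S _; rewrite distrC.
have -> : y |: tperm x y @: S = tperm x y @: (x |: S) by rewrite imsetU1 tpermL.
exact: swap_lipschitz_tperm (setU11 x S).
Qed.

Lemma avg_slice_succ f U m : (m < #|U|)%nat ->
  avg (slice U m.+1) f = avg U (avg_star f U m).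
Proof.
move=> m_lt; set N := 'C(#|U|.-1, m).
have N_gt0 : (0 < N)%nat by rewrite bin_gt0 -ltnS prednK // (leq_ltn_trans _ m_lt).
have U_gt0 : (0 < #|U|)%nat by rewrite (leq_ltn_trans _ m_lt).
have m1_neq0 : m.+1%:R != 0 :> R by rewrite pnatr_eq0.
have sum_star : (\sum_(S in slice U m.+1) f S) * m.+1%:R =
                (\sum_(x in U) avg_star f U m x) * N%:R.
  rewrite mulr_natr -sum_slice_setU1 mulr_suml; apply: eq_bigr => x xU.
  by rewrite /avg_star /avg card_slice_setD1 // divfK // pnatr_eq0 -lt0n.
have card_star : #|slice U m.+1|%:R * m.+1%:R = #|U|%:R * N%:R :> R.
  by rewrite card_slice -!natrM mulnC mul_bin_diag.
rewrite /avg -[\sum_(S in _) f S](mulfK m1_neq0) sum_star.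
rewrite -[#|slice U m.+1|%:R](mulfK m1_neq0) card_star.
by field; rewrite nat1r !pnatr_eq0 -!lt0n N_gt0 U_gt0.
Qed.

Lemma sum_expR_dev_slice_le m U f lam :
  (m <= #|U|)%nat -> swap_lipschitz f -> 0 <= lam <= 1 / 2 ->
  \sum_(S in slice U m) expR (lam * (f S - avg (slice U m) f)) <=
  #|slice U m|%:R * expR (2 * lam ^+ 2 * m%:R).
Proof.
move=> + + lam_range; elim: m U f => [|m IH] U f m_le f_lip.
  by rewrite slice0 /avg big_set1 cards1 big_set1 divr1 subrr !mulr0 expR0 mulr1.
set g := avg_star f U m; set mu := avg (slice U m.+1) f; set N := 'C(#|U|.-1, m).
have mu_avg : mu = avg U g := avg_slice_succ f m_le.
have star_le x : x \in U ->
    \sum_(S in slice (U :\ x) m) expR (lam * (f (x |: S) - mu)) <=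
    expR (lam * (g x - mu)) * (N%:R * expR (2 * lam ^+ 2 * m%:R)).
  move=> xU; have m_le' : (m <= #|U :\ x|)%nat by rewrite (cardsD1 x U) xU in m_le.
  have -> : \sum_(S in slice (U :\ x) m) expR (lam * (f (x |: S) - mu)) =
      expR (lam * (g x - mu)) * \sum_(S in slice (U :\ x) m) expR (lam * (f (x |: S) - g x)).
    by rewrite mulr_sumr; apply: eq_bigr => S _; rewrite -expR_add; congr exp; ring.
  apply: ler_wpM2l; first exact/ltW/expR_gt0.
  rewrite /N -(card_slice_setD1 m xU).
  exact: IH m_le' (swap_lipschitz_setU1 x f_lip).
have hoeffding : \sum_(x in U) expR (lam * (g x - mu)) <= #|U|%:R * expR (2 * lam ^+ 2).
  apply: sum_expR_centered_le => //; last by rewrite mu_avg sum_sub_avg.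
  move=> x xU; rewrite mu_avg; apply: norm_sub_avg_le => // y z yU zU.
  exact: avg_star_close.
rewrite -(ler_pMn2r (ltn0Sn m)) -sum_slice_setU1.
apply: le_trans (ler_sum _ star_le) _; rewrite -mulr_suml.
apply: le_trans (ler_wpM2r _ hoeffding) _; first by rewrite mulr_ge0 ?ler0n ?ltW ?expR_gt0.
rewrite -mulrnAl -mulrnA card_slice mulnC -mul_bin_diag natrM.
rewrite /N [m.+1%:R]mulrSr mulrDr mulr1 addrC expR_add.
by rewrite le_eqVlt; apply/orP; left; apply/eqP; ring.
Qed.

Lemma card_upper_tail_le m U f lam (A : {set {set T}}) v :
  (m <= #|U|)%nat -> swap_lipschitz f -> 0 <= lam <= 1 / 2 ->
  A \subset slice U m -> (forall S, S \in A -> v <= f S) ->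
  #|A|%:R * expR (lam * (v - avg (slice U m) f)) <=
  #|slice U m|%:R * expR (2 * lam ^+ 2 * m%:R).
Proof.
move=> m_le f_lip lam_range A_sub v_le.
apply: le_trans (sum_expR_dev_slice_le m_le f_lip lam_range).
rewrite (big_setID A) /= (setIidPr A_sub) -[leLHS]addr0 lerD ?sumr_ge0 //; last first.
  by move=> S _; rewrite ltW ?expR_gt0.
rewrite mulr_natl -sumr_const; apply: ler_sum => S SA; apply: ler_expR.
by rewrite ler_wpM2l ?(andP lam_range).1 // lerD2r v_le.
Qed.
End Slices.

Lemma card_setI_leD (T : finType) (S S' P : {set T}) :
  (#|S :&: P| <= #|S' :&: P| + #|S :\: S'|)%nat.
Proof.
apply: leq_trans (leq_card_setU _ _); apply/subset_leq_card/subsetP => z.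
by rewrite !inE => /andP[-> ->]; case: (z \in S').
Qed.

Section MaxMeet.
Variables (T : finType) (A : {set {set T}}).

Definition max_meet (S : {set T}) : nat := \max_(P in A) #|S :&: P|.

Lemma max_meet_leD S S' : (max_meet S <= max_meet S' + #|S :\: S'|)%nat.
Proof.
apply/bigmax_leqP => P PA; apply: leq_trans (card_setI_leD S S' P) _.
by rewrite leq_add2r (leq_bigmax_cond _ PA).
Qed.

Lemma swap_lipschitz_max_meet : swap_lipschitz (fun S => (max_meet S)%:R).
Proof.
move=> S S' S_S' S'_S.
have le_S : (max_meet S)%:R <= (max_meet S')%:R + 1 :> R.
  by rewrite natr1 ler_nat -addn1 (leq_trans (max_meet_leD S S')) ?leq_add2l.
have le_S' : (max_meet S')%:R <= (max_meet S)%:R + 1 :> R.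
  by rewrite natr1 ler_nat -addn1 (leq_trans (max_meet_leD S' S)) ?leq_add2l.
by rewrite ler_norml; apply/andP; split; lra.
Qed.

Lemma max_meet_ge_card S : S \in A -> (#|S| <= max_meet S)%nat.
Proof. by move=> SA; rewrite -{1}(setIid S) (leq_bigmax_cond _ SA). Qed.

End MaxMeet.

Lemma card_cross_meet_le (T : finType) (a t : nat) (A B : {set {set T}}) :
  (t < a)%nat -> (forall S, S \in A -> #|S| = a) -> (forall S, S \in B -> #|S| = a) ->
  (forall P Q, P \in A -> Q \in B -> (#|P :&: Q| <= t)%nat) ->
  #|A|%:R * #|B|%:R <= ('C(#|T|, a)%:R * expR (- ((a - t)%:R ^+ 2 / (32 * a%:R)))) ^+ 2.
Proof.
move=> t_lt_a A_card B_card AB_meet.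
have [-> | [P0 P0A]] := set_0Vmem A.
  by rewrite cards0 mul0r sqr_ge0.
have a_le : (a <= #|[set: T]|)%nat by rewrite -(A_card _ P0A) cardsT max_card.
have sub_slice (C : {set {set T}}) : (forall S, S \in C -> #|S| = a) -> C \subset slice [set: T] a.
  by move=> C_card; apply/subsetP => S SC; rewrite inE subsetT C_card ?eqxx.
have a_gt0 : 0 < a%:R :> R by rewrite ltr0n (leq_ltn_trans _ t_lt_a).
(* lam minimises 4 lam^2 a - lam (a - t), the exponent of the product of the two tails *)
set s := (a - t)%:R; set lam := s / (8 * a%:R).
have s_eq : s = a%:R - t%:R by rewrite /s natrB // ltnW.
have lam_range : 0 <= lam <= 1 / 2.
  have : s <= a%:R by rewrite s_eq gerDl oppr_le0 ler0n.
  by rewrite /lam ler_pdivrMr ?divr_ge0 ?ler0n ?mulr_gt0 //; lra.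
have tailA := card_upper_tail_le a_le (swap_lipschitz_max_meet A) lam_range
  (sub_slice A A_card) (v := a%:R) _.
have tailB := card_upper_tail_le a_le (swap_lipschitzN (swap_lipschitz_max_meet A)) lam_range
  (sub_slice B B_card) (v := - t%:R) _.
rewrite avgN opprK card_slice cardsT in tailA tailB.
set mu := avg _ _ in tailA tailB; set K := expR (2 * _ * _) in tailA tailB.
set N := 'C(#|T|, a)%:R in tailA tailB *.
have {}tailA : #|A|%:R * expR (lam * (a%:R - mu)) <= N * K.
  by apply: tailA => S SA; rewrite ler_nat -{1}(A_card S SA) max_meet_ge_card.
have {}tailB : #|B|%:R * expR (lam * (mu - t%:R)) <= N * K.
  rewrite addrC in tailB; apply: tailB => S SB; rewrite lerN2 ler_nat.
  by apply/bigmax_leqP => P PA; rewrite setIC AB_meet.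
have := ler_pM (mulr_ge0 (ler0n _ _) (ltW (expR_gt0 _)))
  (mulr_ge0 (ler0n _ _) (ltW (expR_gt0 _))) tailA tailB.
rewrite mulrACA -expR_add -mulrDr addrA subrK -s_eq mulrACA -expR_add -expr2.
move=> prod_le; rewrite -(ler_pM2r (expR_gt0 (lam * s))) exprMn expRX.
rewrite -[leRHS]mulrA -expR_add.
suff -> : - (s ^+ 2 / (32 * a%:R)) *+ 2 + lam * s = 2 * lam ^+ 2 * a%:R + 2 * lam ^+ 2 * a%:R.
  exact: prod_le.
by rewrite /lam mulr2n; field; rewrite gt_eqF.
Qed.

Lemma card_bigcup_le (I T : finType) (P : pred I) (B : I -> {set T}) :
  (#|\bigcup_(i | P i) B i| <= \sum_(i | P i) #|B i|)%nat.
Proof.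
elim/big_rec2: _ => [|i X n _ X_le]; first by rewrite cards0.
by apply: leq_trans (leq_card_setU _ _) _; rewrite leq_add2l.
Qed.

Lemma exists_partners (T : finType) k (F : 'I_k.+1 -> {set T}) (r : rel T) :
  (\sum_(i | i != ord0) #|[set P in F ord0 | [forall Q in F i, ~~ r P Q]]| < #|F ord0|)%nat ->
  exists G : 'I_k.+1 -> T,
    (forall i, G i \in F i) /\ (forall i, i != ord0 -> r (G ord0) (G i)).
Proof.
set lonely := fun i => [set P in F ord0 | [forall Q in F i, ~~ r P Q]].
move=> sum_lt.
have [P PF0 P_partnered] : exists2 P, P \in F ord0 & forall i, i != ord0 -> P \notin lonely i.
  have : ~~ (F ord0 \subset \bigcup_(i | i != ord0) lonely i).
    apply: contraL sum_lt => /subset_leq_card F0_le; rewrite -leqNgt.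
    exact: leq_trans F0_le (card_bigcup_le _ lonely).
  case/subsetPn => P PF0 P_lonely; exists P => // i i0.
  by apply: contra P_lonely => P_lonely_i; apply/bigcupP; exists i.
have [G GP] : exists G : 'I_k.+1 -> T,
    forall i, G i \in F i /\ (if i == ord0 then G i = P else r P (G i)).
  apply: (@fin_all_exists _ (fun=> T) (fun i Q => Q \in F i /\ (if i == ord0 then Q = P else r P Q))) => i.
  case: eqP => [-> | /eqP i0]; first by exists P.
  have := P_partnered i i0; rewrite inE PF0 /= negb_forall => /existsP[Q].
  by rewrite negb_imply negbK => /andP[QFi rPQ]; exists Q.
exists G; split => [i | i i0]; first by case: (GP i).
have [_ ->] := GP ord0.
by have [_] := GP i; rewrite (negbTE i0).
Qed.

Lemma sum_lt_of_mul_le (K : realFieldType) (I : finType) (P : pred I) (b : I -> K) (c X : K) :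
  0 < c -> 0 <= X -> #|P|%:R <= c ^+ 2 -> (forall i, P i -> b i * (c * X + c) <= X ^+ 2) ->
  \sum_(i | P i) b i < c * X + c.
Proof.
move=> c_gt0 X_ge0 P_le b_le.
have M_gt0 : 0 < c * X + c by rewrite ltr_pwDr // mulr_ge0 // ltW.
rewrite -(ltr_pM2r M_gt0) mulr_suml; apply: le_lt_trans (ler_sum _ b_le) _.
rewrite sumr_const -mulr_natl; apply: le_lt_trans (ler_wpM2r (sqr_ge0 X) P_le) _.
nra.
Qed.

Lemma exists_meeting_partners n a t k (F : 'I_k.+1 -> {set {set 'I_n}}) (c s e : R) :
  (t < a)%nat -> (forall i A, A \in F i -> #|A| = a) -> 0 < c -> k%:R <= c ^+ 2 ->
  1 <= s -> expR (- ((a - t)%:R ^+ 2 / (32 * a%:R))) <= e ->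
  (forall i, c * s * e * 'C(n, a)%:R + c <= #|F i|%:R) ->
  exists G : 'I_k.+1 -> {set 'I_n},
    (forall i, G i \in F i) /\ (forall i, i != ord0 -> (t < #|G ord0 :&: G i|)%nat).
Proof.
move=> t_lt_a F_card c_gt0 k_le s_ge1 e_ge F_card_ge.
pose X := s * e * 'C(n, a)%:R.
have F_ge i : c * X + c <= #|F i|%:R by rewrite /X !mulrA.
pose CE := 'C(n, a)%:R * expR (- ((a - t)%:R ^+ 2 / (32 * a%:R))).
have CE_ge0 : 0 <= CE by rewrite mulr_ge0 ?ler0n ?ltW ?expR_gt0.
have CE_le : CE <= X.
  rewrite /CE /X mulrC ler_wpM2r ?ler0n // -[leLHS]mul1r.
  by apply: ler_pM; [exact: ler01 | exact/ltW/expR_gt0 | |].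
apply: (exists_partners (r := [rel P Q | (t < #|P :&: Q|)%nat])).
rewrite -(ltr_nat R) natr_sum; apply: lt_le_trans (F_ge ord0).
apply: sum_lt_of_mul_le => //; first exact: le_trans CE_le.
  by rewrite cardC1 card_ord.
move=> i _; apply: le_trans (ler_wpM2l (ler0n _ _) (F_ge i)) _.
apply: le_trans (card_cross_meet_le t_lt_a _ (F_card i) _) _.
- by move=> P; rewrite inE => /andP[/F_card].
- move=> P Q; rewrite inE => /andP[_ /forallP P_lonely] QFi.
  by have := P_lonely Q; rewrite QFi /= -leqNgt.
by rewrite card_ord !expr2; apply: ler_pM.
Qed.

Lemma pow2_div4_gt0 k : 0 < 2 ^+ k / 4 :> R.
Proof. by rewrite divr_gt0 ?exprn_gt0. Qed.

Lemma le_sqr_pow2_div4 k : k%:R <= (2 ^+ k.+1 / 4) ^+ 2 :> R.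
Proof.
have k_lt : k.+1%:R <= 2 ^+ k :> R by rewrite -natrX ler_nat ltn_expl.
have -> : (2 ^+ k.+1 / 4) ^+ 2 = (2 ^+ k) ^+ 2 / 4 :> R by rewrite [2 ^+ k.+1]exprS; field.
rewrite ler_pdivlMr //; apply: le_trans (_ : _ <= k.+1%:R ^+ 2) _.
  rewrite -natr1 -subr_ge0 (_ : _ - _ = (k%:R - 1) ^+ 2) ?sqr_ge0 //; ring.
by rewrite !expr2; apply: ler_pM; rewrite ?ler0n.
Qed.

Lemma sqrt_32_mul_ge1 n a : (0 < a)%nat -> (a < n)%nat ->
  1 <= Num.sqrt (32 * a%:R * (n - a)%:R) :> R.
Proof.
move=> a_gt0 a_lt_n; rewrite -[leLHS]sqrtr1 ler_sqrt -!natrM ?ler0n //.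
by rewrite -[leLHS]/(1%:R) ler_nat !muln_gt0 a_gt0 subn_gt0 a_lt_n.
Qed.

Lemma expR_sqr_div32_le a t : (t < a)%nat ->
  expR (- ((a - t)%:R ^+ 2 / (32 * a%:R))) <= expR (- (a - t - 1)%:R ^+ 2 / (40 * a%:R)).
Proof.
move=> t_lt_a; apply: ler_expR.
have a_gt0 : 0 < a%:R :> R by rewrite ltr0n (leq_ltn_trans _ t_lt_a).
rewrite [(a - t - 1)%:R]natrB ?subn_gt0 //; set s := (a - t)%:R.
have s_ge1 : 1 <= s by rewrite ler1n subn_gt0.
rewrite -subr_ge0 (_ : _ - _ = (s ^+ 2 + 8 * s - 4) / (160 * a%:R)); last first.
  by field; rewrite gt_eqF.
by rewrite divr_ge0 ?mulr_ge0 ?ler0n //; nra.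
Qed.

(* all_algebra rebound %R to ring_scope; the statement below means Stdlib's R_scope. *)
Local Close Scope ring_scope.
Delimit Scope R_scope with R.
Unset Implicit Arguments.

Theorem lemma5 (n a t k : nat) (Ht : (t < a)%N) (Ha : (a < n)%N)
  (F : 'I_k -> {set {set 'I_n}})
  (Hsub : forall i : 'I_k, forall A, A \in F i -> #|A| = a)
  (Hsize : forall i : 'I_k,
     ((2 ^ k / 4) * sqrt (32 * INR a * INR (n - a))
        * exp (- (INR (a - t - 1)) ^ 2 / (40 * INR a)) * INR 'C(n, a)
      + (2 ^ k / 4) <= INR #|F i|)%R) :
  exists G : 'I_k -> {set 'I_n},
    (forall i, G i \in F i) /\
    (forall i j : 'I_k, nat_of_ord j = 0%N -> (1 <= nat_of_ord i)%N ->
        (t.+1 <= #|G j :&: G i|)%N).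
Proof.
case: k F Hsub Hsize => [|k] F Hsub Hsize; first by exists (fun _ => set0); split; case.
have [|G [GF G_meet]] := exists_meeting_partners Ht Hsub (pow2_div4_gt0 k.+1)
  (le_sqr_pow2_div4 k) (sqrt_32_mul_ge1 (leq_ltn_trans (leq0n t) Ht) Ha)
  (expR_sqr_div32_le Ht).
  by move=> i; have /RleP := Hsize i; rewrite !RealsE.
exists G; split => // i j j0 i_gt0; have -> : j = ord0 by exact: val_inj.
by apply: G_meet; rewrite -(inj_eq val_inj) /= -lt0n.
Qed.
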